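(* Assume that \[ \sum_{i\geq j\geq 0}2^{-(i+j)}h_{i,j}(t)\geq 1/2 \] for all integers $t\geq 1$. Then $\tilde c_t\leq 1/2\leq c_t$ holds for all integers $t\geq 1$.
   Context: $s(n)$ denotes the binary sum of digits of $n\ge0$. For $t\ge0$, $c_t$ (resp. $\tilde c_t$) is the asymptotic density of $\{n\ge0: s(n+t)\ge s(n)\}$ (resp. $\{n\ge 0: s(n+t)>s(n)\}$). A hyperbinary expansion of a nonnegative integer $n$ is a sequence $(\varepsilon_{\nu-1},\ldots,\varepsilon_0)\in \{0,1,2\}^{\nu}$ ($\nu\ge0$) with $\sum_{0\leq i<\nu}\varepsilon_i2^i=n$; it is proper if $\nu=0$ or $\varepsilon_{\nu-1}\neq 0$. For $i,j\ge0$ and $t\ge1$, $h_{i,j}(t)$ is the number of proper hyperbinary expansions of $t-1$ having exactly $i$ digits equal to $2$ and exactly $j$ digits equal to $0$. *)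

From HB Require Import structures.
From mathcomp Require Import all_boot all_order all_algebra.
From mathcomp Require Import all_classical all_reals all_analysis.
Set Implicit Arguments. Unset Strict Implicit. Unset Printing Implicit Defensive.
Import Order.TTheory GRing.Theory Num.Theory.
Import numFieldNormedType.Exports.
Local Open Scope classical_set_scope.

(* s(n): binary sum of digits of n.  Digit k of n is odd (n %/ 2^k);
   positions k <= n suffice since n < 2^(n+1). *)
Definition s (n : nat) : nat := \sum_(k < n.+1) odd (n %/ 2 ^ k).

(* A hyperbinary expansion of length nu, stored little-endian:
   e`_k = epsilon_k, digits in 'I_3 = {0,1,2}. *)
Definition hb_value (nu : nat) (e : nu.-tuple 'I_3) : nat :=
  \sum_(k < nu) (tnth e k : nat) * 2 ^ k.

Definition hb_proper (nu : nat) (e : nu.-tuple 'I_3) : bool :=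
  (nu == 0%N) || (nth 0%N [seq val x | x <- e] nu.-1 != 0%N).

(* h_{i,j}(t): number of proper hyperbinary expansions of t-1 with exactly
   i digits equal to 2 and j digits equal to 0.  A proper expansion of m of
   length nu >= 1 satisfies 2^(nu-1) <= m, hence nu <= m; so all proper
   expansions of t-1 have length nu < t (nu <= t-1), and we count over all
   lengths nu < t.+1 (a harmless superset). *)
Definition h (i j t : nat) : nat :=
  \sum_(nu < t.+1)
    #|[pred e : nu.-tuple 'I_3 |
        [&& hb_proper e, hb_value e == t.-1,
            count (fun x : 'I_3 => val x == 2%N) e == i &
            count (fun x : 'I_3 => val x == 0%N) e == j]]|.

Definition prop_below {R : realType} (P : pred nat) (N : nat) : R :=
  ((count P (iota 0 N))%:R / N%:R)%R.

Definition has_density {R : realType} (P : pred nat) (c : R) : Prop :=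
  (fun N : nat => prop_below P N) @ \oo --> c.

Definition hsum {R : realType} (t : nat) : \bar R :=
  (\sum_(i <oo) (\sum_(j < i.+1) (2%:R ^- (i + j) * (h i j t)%:R : R))%:E)%E.

From HB Require Import structures.
From mathcomp Require Import all_boot all_order all_algebra.
From mathcomp Require Import all_classical all_reals all_analysis.
From mathcomp Require Import zify ring lra.
Import Order.TTheory GRing.Theory Num.Theory.
Import numFieldNormedType.Exports.
Set Implicit Arguments. Unset Strict Implicit. Unset Printing Implicit Defensive.

(* Put T(t,d) := sum_{i - j >= d} 2^{-(i+j)} h_{i,j}(t), so that the hypothesis reads T(t,0) >= 1/2.
   Splitting off the lowest digit of a hyperbinary expansion gives T(1,d) = [d <= 0],
   T(2m,d) = T(m,d) and T(2m+1,d) = (T(m,d-1) + T(m+1,d+1))/2.  Splitting off the lowest binary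
   digit of n, the proportion of n < 2^M with s(n+t) - s(n) >= d obeys the same recursion in t,
   but equals [d <= 0] at t = 0; unrolling it shows that it lies between
   S_K(t,d) := sum_{g<K} 2^{-g-1} T(t,d-1+g) and S_K(t,d) + 2^{-K}.  Since s(n+t) - s(n) only
   depends on n mod 2^M outside a proportion t 2^{-M} of residues, these proportions converge
   to the density of {n : s(n+t) - s(n) >= d}, which therefore obeys the same bounds.
   Unrolling the recursion of T from t 2^K + 1 gives T(t 2^K + 1, 0) = S_K(t,0) + O(2^{-K}),
   hence c_t >= 1/2.  Unrolling it from v 2^K - 1 with v = 3 2^k - 2t, where 2^k <= 2t < 2^{k+1},
   and using the reflection T(3 2^k - u, d) = 1 - T(u, 1-d) for 2^k <= u <= 2^{k+1} gives
   S_K(t,1) <= 1/2, hence tilde c_t <= 1/2. *)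

Lemma card_tuple0 (T : finType) (P : pred (0.-tuple T)) : #|P| = P [tuple].
Proof.
have [HP|HP] := boolP (P [tuple]).
  by rewrite (@eq_card _ _ predT) ?card_tuple // => e; rewrite tuple0 !inE; exact: HP.
by apply: eq_card0 => e; rewrite tuple0; apply/negbTE.
Qed.

Lemma card_tuple_cons (T : finType) nu (P : pred (nu.+1.-tuple T)) :
  #|P| = \sum_(x : T) #|[pred e : nu.-tuple T | P [tuple of x :: e]]|.
Proof.
rewrite -sum1_card.
pose split_head (u : nu.+1.-tuple T) := (thead u, [tuple of behead u]).
pose cons_head (p : T * nu.-tuple T) := [tuple of p.1 :: p.2].
have consK : cancel cons_head split_head.
  by move=> [x e]; rewrite /split_head theadE; congr pair; apply: val_inj.
rewrite (reindex cons_head); last by exists split_head => // u _; exact/esym/tuple_eta.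
under [RHS]eq_bigr => x _ do rewrite -sum1_card.
by rewrite pair_big_dep; apply: eq_bigl => -[x e]; rewrite inE.
Qed.

Lemma big_ord_trunc (T : Type) (idx : T) (op : Monoid.law idx) (F : nat -> T) n m :
  n <= m -> (forall i, n <= i -> F i = idx) ->
  \big[op/idx]_(i < m) F i = \big[op/idx]_(i < n) F i.
Proof.
move=> /subnKC <- F_idx; rewrite big_split_ord /= [X in op _ X]big1 ?Monoid.mulm1 // => i _.
by apply: F_idx; rewrite leq_addr.
Qed.

Lemma binary_ind (P : nat -> Prop) :
  P 1 -> (forall m, 0 < m -> P m -> P (2 * m)) ->
  (forall m, 0 < m -> P m -> P m.+1 -> P (2 * m).+1) ->
  forall t, 0 < t -> P t.
Proof.
move=> P1 P_even P_odd; elim/ltn_ind => t IH t_gt0.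
have [->|t_ne1] := eqVneq t 1; first by [].
have := odd_double_half t; rewrite -muln2 mulnC.
by case: (odd t) => /= t_eq; rewrite -t_eq; [apply: P_odd | apply: P_even];
  try apply: IH; lia.
Qed.

Definition hb_count (nu v i j : nat) : nat :=
  #|[pred e : nu.-tuple 'I_3 |
        [&& hb_proper e, hb_value e == v,
            count (fun x : 'I_3 => val x == 2) e == i &
            count (fun x : 'I_3 => val x == 0) e == j]]|.

Definition hb_total (L v i j : nat) : nat := \sum_(nu < L) hb_count nu v i j.

Lemma h_hb_total i j t : h i j t = hb_total t.+1 t.-1 i j.
Proof. by []. Qed.

Lemma hb_value_cons nu (x : 'I_3) (e : nu.-tuple 'I_3) :
  hb_value [tuple of x :: e] = x + 2 * hb_value e.
Proof.
rewrite /hb_value big_ord_recl tnth0 expn0 muln1 big_distrr /=; congr (_ + _).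
by apply: eq_bigr => k _; rewrite tnthS expnS mulnCA.
Qed.

Lemma hb_proper_cons nu (x : 'I_3) (e : nu.-tuple 'I_3) :
  hb_proper [tuple of x :: e] = (if nu is 0 then val x != 0 else hb_proper e).
Proof. by case: nu e. Qed.

Lemma hb_value_proper_ge nu (e : nu.-tuple 'I_3) :
  hb_proper e -> 0 < nu -> 2 ^ nu.-1 <= hb_value e.
Proof.
case: nu e => [|n] e // /orP [//|lead_nz] _.
rewrite /hb_value big_ord_recr /= (leq_trans _ (leq_addl _ _)) //.
have : 0 < tnth e ord_max.
  move: lead_nz; rewrite (tnth_nth (tnth_default e ord_max)) /= lt0n.
  by rewrite (nth_map (tnth_default e ord_max)) ?size_tuple.
by case: (tnth e ord_max : nat) => // k _; rewrite mulSn leq_addr.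
Qed.

Lemma hb_count_eq0 nu v i j : v < nu -> hb_count nu v i j = 0.
Proof.
move=> v_lt; apply: eq_card0 => e; rewrite !inE.
apply/negP => /and4P [e_proper /eqP e_val _ _].
have := hb_value_proper_ge e_proper (leq_ltn_trans (leq0n v) v_lt).
by rewrite e_val; have := ltn_expl nu.-1 (isT : 1 < 2); lia.
Qed.

Lemma hb_count0 v i j : hb_count 0 v i j = [&& v == 0, i == 0 & j == 0].
Proof. by rewrite /hb_count card_tuple0 /= /hb_value big_ord0 !(eq_sym 0). Qed.

Lemma hb_count_cons nu v i j : 0 < v ->
  hb_count nu.+1 v i j = \sum_(x : 'I_3) #|[pred e : nu.-tuple 'I_3 |
     [&& hb_proper e, x + 2 * hb_value e == v,
         (val x == 2) + count (fun y : 'I_3 => val y == 2) e == i &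
         (val x == 0) + count (fun y : 'I_3 => val y == 0) e == j]]|.
Proof.
move=> v_gt0; rewrite /hb_count card_tuple_cons; apply: eq_bigr => x _.
apply: eq_card => e; rewrite !inE hb_value_cons hb_proper_cons /=.
case: nu e => [|n] e //; rewrite /hb_proper /hb_value big_ord0 muln0 addn0 /=.
by have [->|] := eqVneq (val x) 0; first by case: v v_gt0.
Qed.

Lemma hb_count_odd nu w i j : hb_count nu.+1 (2 * w).+1 i j = hb_count nu w i j.
Proof.
rewrite hb_count_cons // !big_ord_recl big_ord0 /= /bump !leq0n /= !addn0.
rewrite [X in X + _]eq_card0 ?add0n ?[X in _ + X]eq_card0 ?addn0;
  try by move=> e; rewrite !inE; apply/negP => /and4P [_ /eqP ? _ _]; lia.
apply: eq_card => e; rewrite !inE /=.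
by congr [&& _, _, _ & _]; apply/eqP/eqP; lia.
Qed.

Lemma hb_count_even nu w i j : 0 < w -> hb_count nu.+1 (2 * w) i j =
  (if j is j'.+1 then hb_count nu w i j' else 0) +
  (if i is i'.+1 then hb_count nu w.-1 i' j else 0).
Proof.
move=> w_gt0; rewrite hb_count_cons ?muln_gt0 //.
rewrite !big_ord_recl big_ord0 /= /bump !leq0n /= !addn0.
rewrite [X in _ + (X + _)]eq_card0 ?add0n; last first.
  by move=> e; rewrite !inE; apply/negP => /and4P [_ /eqP ? _ _]; lia.
congr (_ + _).
  case: j => [|j]; first by apply: eq_card0 => e; rewrite !inE /= !andbF.
  apply: eq_card => e; rewrite !inE /=.
  by congr [&& _, _, _ & _]; apply/eqP/eqP; lia.
case: i => [|i]; first by apply: eq_card0 => e; rewrite !inE /= !andbF.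
apply: eq_card => e; rewrite !inE /=.
by congr [&& _, _, _ & _]; apply/eqP/eqP; lia.
Qed.

Lemma hb_total_stable L v i j : v < L -> hb_total L v i j = hb_total v.+1 v i j.
Proof.
move=> /subnKC <-; elim: (L - v.+1) => [|k IH]; first by rewrite addn0.
by rewrite addnS /hb_total big_ord_recr /= -/(hb_total _ _ _ _) IH hb_count_eq0 ?addn0 //; lia.
Qed.

Lemma hb_total_succ L v i j : 0 < v ->
  hb_total L.+1 v i j = \sum_(nu < L) hb_count nu.+1 v i j.
Proof. by move=> v_gt0; rewrite /hb_total big_ord_recl hb_count0; case: v v_gt0. Qed.

Lemma h_one i j : h i j 1 = [&& i == 0 & j == 0].
Proof.
by rewrite h_hb_total /hb_total big_ord_recr big_ord1 /= hb_count0 hb_count_eq0 ?addn0.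
Qed.

Lemma h_double i j m : 0 < m -> h i j (2 * m) = h i j m.
Proof.
move=> m_gt0; rewrite !h_hb_total (_ : (2 * m).-1 = (2 * m.-1).+1); last by lia.
rewrite hb_total_succ //; under eq_bigr do rewrite hb_count_odd.
by rewrite -/(hb_total _ _ _ _) !hb_total_stable //; lia.
Qed.

Lemma h_odd i j m : 0 < m -> h i j (2 * m).+1 =
  (if i is i'.+1 then h i' j m else 0) + (if j is j'.+1 then h i j' m.+1 else 0).
Proof.
move=> m_gt0; rewrite !h_hb_total /= hb_total_succ ?muln_gt0 //.
under eq_bigr do rewrite hb_count_even //.
rewrite big_split /= addnC; congr (_ + _).
  case: i => [|i]; first by rewrite big1.
  by rewrite -/(hb_total _ _ _ _) h_hb_total !hb_total_stable //; lia.
case: j => [|j]; first by rewrite big1.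
by rewrite -/(hb_total _ _ _ _) h_hb_total !hb_total_stable //; lia.
Qed.

Lemma h_eq0 t : 0 < t -> forall i j, (t <= i) || (t <= j) -> h i j t = 0.
Proof.
elim/binary_ind => [|m m_gt0 IH|m m_gt0 IHm IHm1] i j ij_big.
- by rewrite h_one; case: i ij_big => [|i]; case: j.
- by rewrite h_double // IH //; lia.
- by rewrite h_odd //; case: i ij_big => [|i]; case: j => [|j] ? //=; rewrite ?IHm ?IHm1 //; lia.
Qed.

Lemma s_digits n B : n <= B -> s n = \sum_(k < B) odd (n %/ 2 ^ k).
Proof.
have digit0 k : n <= k -> odd (n %/ 2 ^ k) = 0 :> nat.
  by move=> nk; rewrite divn_small // (leq_trans (ltn_expl n (isT : 1 < 2))) // leq_pexp2l.
pose digit k := odd (n %/ 2 ^ k) : nat.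
by move=> nB; rewrite /s (big_ord_trunc _ (F := digit) _ digit0) // [RHS](big_ord_trunc _ _ digit0).
Qed.

Lemma s0 : s 0 = 0.
Proof. by rewrite /s big_ord1. Qed.

Lemma s_double n : s (2 * n) = s n.
Proof.
rewrite (@s_digits _ (2 * n).+1) // (@s_digits _ (2 * n)) ?leq_pmull //.
rewrite big_ord_recl /= expn0 divn1 oddM add0n; apply: eq_bigr => k _.
by rewrite /bump /= add1n expnS divnMl.
Qed.

Lemma s_odd n : s (2 * n).+1 = (s n).+1.
Proof.
rewrite (@s_digits _ (2 * n).+1) // (@s_digits _ (2 * n)) ?leq_pmull //.
rewrite big_ord_recl /= expn0 divn1 oddS oddM add1n; congr _.+1; apply: eq_bigr => k _.
rewrite /bump /= add1n expnS divnMA; congr (odd (_ %/ _)).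
by rewrite -addn1 mulnC divnMDl // divn_small // addn0.
Qed.

Lemma s_shiftD M q r : r < 2 ^ M -> s (q * 2 ^ M + r) = s q + s r.
Proof.
elim: M q r => [|M IH] q r r_lt; first by case: r r_lt => // _; rewrite muln1 addn0 s0 addn0.
have := odd_double_half r; set r' := r./2; rewrite -muln2 mulnC expnS in r_lt *.
case: (odd r) => /= r_eq; rewrite -{}r_eq in r_lt *.
  by rewrite (_ : q * (2 * 2 ^ M) + (1 + 2 * r') = (2 * (q * 2 ^ M + r')).+1) ?add1n
    ?s_odd ?IH ?addnS //; lia.
by rewrite (_ : q * (2 * 2 ^ M) + (0 + 2 * r') = 2 * (q * 2 ^ M + r')) ?add0n
  ?s_double ?IH //; lia.
Qed.

Section HyperbinaryMass.
Variable R : realFieldType.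
Local Open Scope ring_scope.

(* The T(t,d) above; by [h_eq0], summing only over i, j < t loses nothing. *)
Definition hmass_term (t : nat) (d : int) (i j : nat) : R :=
  if d <= i%:Z - j%:Z then 2 ^- (i + j) * (h i j t)%:R else 0.

Definition hmass_upto (B1 B2 t : nat) (d : int) : R :=
  \sum_(i < B1) \sum_(j < B2) hmass_term t d i j.

Definition hmass (t : nat) (d : int) : R := hmass_upto t t t d.

Lemma hmass_uptoE B1 B2 t d : (0 < t)%N -> (t <= B1)%N -> (t <= B2)%N ->
  hmass_upto B1 B2 t d = hmass t d.
Proof.
move=> t_gt0 tB1 tB2; have term0 i j : (t <= i)%N || (t <= j)%N -> hmass_term t d i j = 0.
  by move=> ij_big; rewrite /hmass_term h_eq0 // mulr0 if_same.
rewrite /hmass /hmass_upto.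
rewrite (big_ord_trunc _ (F := fun i => \sum_(j < B2) hmass_term t d i j) tB1); last first.
  by move=> i ti; rewrite big1 // => j _; rewrite term0 ?ti.
apply: eq_bigr => i _; rewrite (big_ord_trunc _ (F := hmass_term t d i) tB2) // => j tj.
by rewrite term0 ?tj ?orbT.
Qed.

Lemma hmass_one d : hmass 1 d = if d <= 0 then 1 else 0.
Proof. by rewrite /hmass /hmass_upto !big_ord1 /hmass_term h_one subr0 expr0 invr1 mul1r. Qed.

Lemma hmass_double m d : (0 < m)%N -> hmass (2 * m) d = hmass m d.
Proof.
move=> m_gt0; rewrite -[RHS](@hmass_uptoE (2 * m) (2 * m)) ?leq_pmull //.
by apply: eq_bigr => i _; apply: eq_bigr => j _; rewrite /hmass_term h_double.
Qed.

Lemma invexp2S n : 2 ^- n.+1 = 2^-1 * 2 ^- n :> R.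
Proof. by rewrite exprS invfM. Qed.

Lemma hmass_term_odd m d i j : (0 < m)%N ->
  hmass_term (2 * m).+1 d i j =
  (if i is i'.+1 then 2^-1 * hmass_term m (d - 1) i' j else 0) +
  (if j is j'.+1 then 2^-1 * hmass_term m.+1 (d + 1) i j' else 0).
Proof.
move=> m_gt0; rewrite /hmass_term h_odd //.
case: i => [|i]; case: j => [|j]; rewrite ?add0r ?addr0 ?add0n ?addn0 /=.
- by rewrite mulr0 if_same.
- by do 2 case: ifP => ?; try lia; rewrite ?mulr0 // invexp2S mulrA.
- by do 2 case: ifP => ?; try lia; rewrite ?mulr0 // invexp2S mulrA.
- do 3 case: ifP => ?; try lia; rewrite ?mulr0 ?addr0 //.
  by rewrite natrD mulrDr addSn addnS !invexp2S !mulrA.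
Qed.

Lemma hmass_odd m d : (0 < m)%N ->
  hmass (2 * m).+1 d = 2^-1 * hmass m (d - 1) + 2^-1 * hmass m.+1 (d + 1).
Proof.
move=> m_gt0; rewrite {1}/hmass /hmass_upto.
under eq_bigr do under eq_bigr do rewrite hmass_term_odd //.
under eq_bigr do rewrite big_split /=.
rewrite big_split /=; congr (_ + _).
  rewrite big_ord_recl /= big1 // add0r.
  under eq_bigr do rewrite -mulr_sumr.
  by rewrite -mulr_sumr -/(hmass_upto _ _ m _) hmass_uptoE //; lia.
under eq_bigr do rewrite big_ord_recl /= add0r -mulr_sumr.
by rewrite -mulr_sumr -/(hmass_upto _ _ m.+1 _) hmass_uptoE //; lia.
Qed.

Lemma hmass_bounds t : (0 < t)%N -> forall d, 0 <= hmass t d <= 1.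
Proof.
elim/binary_ind => [|m m_gt0 IH|m m_gt0 IHm IHm1] d.
- by rewrite hmass_one; case: ifP; rewrite ?lexx ?ler01.
- by rewrite hmass_double.
- rewrite hmass_odd //.
  by move: (IHm (d - 1)) (IHm1 (d + 1)) => /andP [? ?] /andP [? ?]; apply/andP; split; lra.
Qed.

Lemma hmass_mul_pow2 t K d : (0 < t)%N -> hmass (t * 2 ^ K) d = hmass t d.
Proof.
move=> t_gt0; elim: K => [|K IH]; first by rewrite muln1.
by rewrite expnS mulnCA hmass_double // muln_gt0 t_gt0 expn_gt0.
Qed.

(* 2^{-g-1} is the density of the n whose binary expansion ends in exactly g ones. *)
Definition carry_sum (K t : nat) (d : int) : R :=
  \sum_(g < K) 2 ^- g.+1 * hmass t (d - 1 + g%:Z).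

Lemma carry_sum_succ K t d :
  carry_sum K.+1 t d = 2^-1 * hmass t (d - 1) + 2^-1 * carry_sum K t (d + 1).
Proof.
rewrite /carry_sum big_ord_recl /= expr1 addr0; congr (_ + _).
rewrite mulr_sumr; apply: eq_bigr => g _.
by rewrite invexp2S mulrA /bump /= add1n; congr (_ * hmass t _); lia.
Qed.

Lemma carry_sum_double K m d : (0 < m)%N -> carry_sum K (2 * m) d = carry_sum K m d.
Proof. by move=> m_gt0; apply: eq_bigr => g _; rewrite hmass_double. Qed.

Lemma carry_sum_odd K m d : (0 < m)%N ->
  carry_sum K (2 * m).+1 d = 2^-1 * carry_sum K m (d - 1) + 2^-1 * carry_sum K m.+1 (d + 1).
Proof.
move=> m_gt0; rewrite /carry_sum !mulr_sumr -big_split; apply: eq_bigr => g _ /=.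
rewrite hmass_odd // (_ : d - 1 + g%:Z - 1 = d - 1 - 1 + g%:Z); last by lia.
by rewrite (_ : d - 1 + g%:Z + 1 = d + 1 - 1 + g%:Z); [lra | lia].
Qed.

Lemma hmass_mul_pow2_succ t K d : (0 < t)%N ->
  hmass (t * 2 ^ K).+1 d = carry_sum K t d + 2 ^- K * hmass t.+1 (d + K%:Z).
Proof.
move=> t_gt0; elim: K d => [|K IH] d.
  by rewrite muln1 /carry_sum big_ord0 add0r expr0 invr1 mul1r addr0.
rewrite expnS mulnCA hmass_odd ?muln_gt0 ?t_gt0 ?expn_gt0 // hmass_mul_pow2 // IH.
rewrite carry_sum_succ invexp2S mulrDr addrA !mulrA; congr (_ + _ * hmass t.+1 _); lia.
Qed.

Definition borrow_sum (K v : nat) (d : int) : R :=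
  \sum_(g < K) 2 ^- g.+1 * hmass v (d + 1 - g%:Z).

Lemma borrow_sum_succ K v d :
  borrow_sum K.+1 v d = 2^-1 * hmass v (d + 1) + 2^-1 * borrow_sum K v (d - 1).
Proof.
rewrite /borrow_sum big_ord_recl /= expr1 subr0; congr (_ + _).
rewrite mulr_sumr; apply: eq_bigr => g _.
by rewrite invexp2S mulrA /bump /= add1n; congr (_ * hmass v _); lia.
Qed.

Lemma hmass_mul_pow2_pred v K d : (2 <= v)%N ->
  hmass (v * 2 ^ K).-1 d = borrow_sum K v d + 2 ^- K * hmass v.-1 (d - K%:Z).
Proof.
move=> v_ge2; elim: K d => [|K IH] d.
  by rewrite muln1 /borrow_sum big_ord0 add0r expr0 invr1 mul1r subr0.
have pow_gt0 : (0 < 2 ^ K)%N by rewrite expn_gt0.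
rewrite (_ : (v * 2 ^ K.+1).-1 = (2 * (v * 2 ^ K).-1).+1); last by rewrite expnS; nia.
rewrite hmass_odd; last by nia.
rewrite IH prednK ?muln_gt0 ?pow_gt0 ?(leq_trans _ v_ge2) // hmass_mul_pow2 ?(leq_trans _ v_ge2) //.
rewrite borrow_sum_succ invexp2S (_ : d - K.+1%:Z = d - 1 - K%:Z); [lra | lia].
Qed.

Lemma hmass_reflect k t d : (2 ^ k <= t <= 2 ^ k.+1)%N ->
  hmass (3 * 2 ^ k - t) d = 1 - hmass t (1 - d).
Proof.
elim: k t d => [|k IH] t d.
  rewrite expn0 expn1 => /andP [t_ge1 t_le2].
  have hmass2 e : hmass 2 e = hmass 1 e by rewrite (@hmass_double 1).
  have t12 : t = 1%N \/ t = 2%N by lia.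
  by case: t12 => ->; rewrite hmass2 !hmass_one; do 2 case: ifP => ?; try lia;
    rewrite ?subrr ?subr0.
move=> /andP [t_lo t_hi]; have pow_gt0 : (0 < 2 ^ k)%N by rewrite expn_gt0.
have := odd_double_half t; set m := t./2; rewrite -muln2 mulnC.
case: (odd t) => /= t_eq; rewrite -{}t_eq in t_lo t_hi *; rewrite !expnS in t_lo t_hi *.
  rewrite (_ : 3 * (2 * 2 ^ k) - (1 + 2 * m) = (2 * (3 * 2 ^ k - m.+1)).+1)%N; last by lia.
  rewrite !hmass_odd; try lia.
  rewrite (_ : (3 * 2 ^ k - m.+1).+1 = 3 * 2 ^ k - m)%N; last by lia.
  rewrite !IH ?expnS; try (apply/andP; split; lia).
  rewrite (_ : 1 - (d - 1) = 1 - d + 1); last by lia.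
  by rewrite (_ : 1 - (d + 1) = 1 - d - 1); [lra | lia].
rewrite add0n (_ : 3 * (2 * 2 ^ k) - 2 * m = 2 * (3 * 2 ^ k - m))%N; last by lia.
by rewrite !hmass_double ?IH ?expnS //; try (apply/andP; split); lia.
Qed.
End HyperbinaryMass.

Definition count_below (P : pred nat) (N : nat) : nat := count P (iota 0 N).

Lemma count_below_double (P : pred nat) N :
  count_below P (2 * N) =
  count_below (fun n => P (2 * n)) N + count_below (fun n => P (2 * n).+1) N.
Proof.
rewrite /count_below; elim: N => [|N IH] //.
have -> : iota 0 (2 * N.+1) = iota 0 (2 * N) ++ [:: 2 * N; (2 * N).+1].
  by rewrite mulnS addnC iotaD.
rewrite -[N.+1]addn1 iotaD !count_cat IH /=.
by case: (P (2 * N)); case: (P (2 * N).+1); rewrite /=; lia.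
Qed.

Lemma count_below_periodic (F : pred nat) Q k r : 0 < Q -> (forall n, F n = F (n %% Q)) ->
  count_below F (k * Q + r) = k * count_below F Q + count_below F r.
Proof.
move=> Q_gt0 F_per; have shift j r' : count F (iota (j * Q) r') = count_below F r'.
  rewrite -[j * Q]addn0 iotaDl count_map; apply: eq_count => x /=.
  by rewrite F_per [in RHS]F_per modnMDl.
rewrite /count_below iotaD count_cat add0n shift; congr addn.
elim: k => [|k IH]; first by rewrite mul0n.
by rewrite mulSnr iotaD count_cat IH add0n shift mulSnr.
Qed.

Lemma count_below_le (F : pred nat) N : count_below F N <= N.
Proof. by rewrite /count_below (leq_trans (count_size _ _)) // size_iota. Qed.

Definition excess (t : nat) (d : int) : pred nat :=
  fun n => (d <= (s (n + t))%:Z - (s n)%:Z)%R.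

Lemma excess0E t : excess t 0 = (fun n => s n <= s (n + t)).
Proof. by apply/funext => n; apply/idP/idP; rewrite /excess; lia. Qed.

Lemma excess1E t : excess t 1 = (fun n => s n < s (n + t)).
Proof. by apply/funext => n; apply/idP/idP; rewrite /excess; lia. Qed.

Lemma excess_double_double m d : (fun n => excess (2 * m) d (2 * n)) =1 excess m d.
Proof. by move=> n; rewrite /excess -mulnDr !s_double. Qed.

Lemma excess_double_odd m d : (fun n => excess (2 * m) d (2 * n).+1) =1 excess m d.
Proof. by move=> n; rewrite /excess addSn -mulnDr !s_odd; apply/idP/idP; lia. Qed.

Lemma excess_odd_double m d : (fun n => excess (2 * m).+1 d (2 * n)) =1 excess m (d - 1)%R.
Proof.
move=> n; rewrite /excess addnS -mulnDr s_odd !s_double.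
by apply/idP/idP; lia.
Qed.

Lemma excess_odd_odd m d : (fun n => excess (2 * m).+1 d (2 * n).+1) =1 excess m.+1 (d + 1)%R.
Proof.
move=> n; rewrite /excess (_ : ((2 * n).+1 + (2 * m).+1 = 2 * (n + m.+1))%N); last by lia.
by rewrite s_double s_odd; apply/idP/idP; lia.
Qed.

Lemma excess_mod M t d n : n %% 2 ^ M + t < 2 ^ M -> excess t d n = excess t d (n %% 2 ^ M).
Proof.
move=> no_carry; rewrite /excess {1 2}(divn_eq n (2 ^ M)) -addnA.
by rewrite !s_shiftD ?ltn_pmod ?expn_gt0 //; congr (_ <= _)%R; rewrite !PoszD; lia.
Qed.

Lemma count_excess_blocks M t d N : t <= 2 ^ M ->
  N %/ 2 ^ M * count_below (excess t d) (2 ^ M) <= count_below (excess t d) N + N %/ 2 ^ M * t /\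
  count_below (excess t d) N <= N %/ 2 ^ M * (count_below (excess t d) (2 ^ M) + t) + 2 * 2 ^ M.
Proof.
set Q := 2 ^ M => tQ; have Q_gt0 : 0 < Q by rewrite expn_gt0.
(* Adding t to n causes no carry out of the low M bits exactly when n %% Q + t < Q; on such n,
   [excess t d] is Q-periodic, and the other residues number at most t per period. *)
pose no_carry n := (n %% Q + t < Q) && excess t d (n %% Q).
pose carry n := Q <= n %% Q + t.
have no_carry_per n : no_carry n = no_carry (n %% Q) by rewrite /no_carry modn_mod.
have carry_per n : carry n = carry (n %% Q) by rewrite /carry modn_mod.
have count_sub N' : count_below no_carry N' <= count_below (excess t d) N'.
  by apply: sub_count => n /andP [? ?]; rewrite (@excess_mod M).
have count_union N' :
    count_below (excess t d) N' <= count_below no_carry N' + count_below carry N'.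
  rewrite /count_below -count_predUI (leq_trans _ (leq_addr _ _)) // sub_count // => n ?.
  by rewrite /= /no_carry /carry; case: ltnP => //= ?; rewrite orbF -(@excess_mod M).
have carry_Q : count_below carry Q <= t.
  rewrite /count_below -(subnK tQ) iotaD count_cat add0n.
  rewrite (@eq_in_count _ _ pred0) ?count_pred0; last first.
    by move=> b; rewrite mem_iota /carry => /andP [_ ?]; rewrite modn_small /=; lia.
  by rewrite (leq_trans (count_size _ _)) // size_iota.
have N_union := count_union N; have N_sub := count_sub N.
rewrite [in count_below no_carry N](divn_eq N Q) [in count_below carry N](divn_eq N Q)
  !count_below_periodic // in N_union N_sub.
split.
  have := leq_mul (leqnn (N %/ Q)) (leq_trans (count_union Q) (leq_add (leqnn _) carry_Q)).
  nia.
have := leq_mul (leqnn (N %/ Q)) (count_sub Q); have := leq_mul (leqnn (N %/ Q)) carry_Q.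
have := count_below_le no_carry (N %% Q); have := count_below_le carry (N %% Q).
have := ltn_pmod N Q_gt0; nia.
Qed.

Lemma count_excess_cross M t d N : t <= 2 ^ M ->
  count_below (excess t d) N * 2 ^ M <=
    (count_below (excess t d) (2 ^ M) + t) * N + 2 * 2 ^ M * 2 ^ M /\
  count_below (excess t d) (2 ^ M) * N <=
    count_below (excess t d) N * 2 ^ M + t * N + 2 ^ M * 2 ^ M.
Proof.
move=> tQ; have [lower upper] := count_excess_blocks d N tQ; move: lower upper.
set Q := 2 ^ M; set x := count_below _ N; set y := count_below _ Q; set k := N %/ Q.
have Q_gt0 : 0 < Q by rewrite expn_gt0.
have N_eq : N = k * Q + N %% Q by apply: divn_eq.
have r_lt : N %% Q < Q by rewrite ltn_pmod.
have y_le : y <= Q by apply: count_below_le.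
have kQ_le : k * Q <= N by apply: leq_trunc_div.
move=> lower upper; split.
  by have := leq_mul upper (leqnn Q); have := leq_mul kQ_le (leqnn (y + t)); nia.
have := leq_mul lower (leqnn Q); have := leq_mul (leqnn y) (ltnW r_lt).
have := leq_mul y_le (leqnn Q); have := leq_mul kQ_le (leqnn t); nia.
Qed.

Local Open Scope classical_set_scope.
Local Open Scope ring_scope.

Section ExcessFrequency.
Variable R : realType.

Definition excess_freq (M t : nat) (d : int) : R := prop_below (excess t d) (2 ^ M).

Lemma excess_freq_double M m d : excess_freq M.+1 (2 * m) d = excess_freq M m d.
Proof.
rewrite /excess_freq /prop_below -/(count_below _ _) expnS count_below_double /count_below.
rewrite (eq_count (excess_double_double m d)) (eq_count (excess_double_odd m d)).
have pow_neq0 : (2 ^ M)%:R != 0 :> R by rewrite pnatr_eq0 expn_eq0.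
by rewrite addnn -muln2 !natrM; field.
Qed.

Lemma excess_freq_odd M m d : excess_freq M.+1 (2 * m).+1 d =
  2^-1 * excess_freq M m (d - 1) + 2^-1 * excess_freq M m.+1 (d + 1).
Proof.
rewrite /excess_freq /prop_below -!/(count_below _ _) expnS count_below_double /count_below.
rewrite (eq_count (excess_odd_double m d)) (eq_count (excess_odd_odd m d)).
have pow_neq0 : (2 ^ M)%:R != 0 :> R by rewrite pnatr_eq0 expn_eq0.
by rewrite natrD natrM; field.
Qed.

Lemma excess_freq0 M d : excess_freq M 0 d = if d <= 0 then 1 else 0.
Proof.
have pow_neq0 : (2 ^ M)%:R != 0 :> R by rewrite pnatr_eq0 expn_eq0.
rewrite /excess_freq /prop_below; case: ifP => d_le0.
  rewrite (eq_count (a2 := predT)); last by move=> n; rewrite /excess addn0 subrr.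
  by rewrite count_predT size_iota divff.
rewrite (eq_count (a2 := pred0)); last by move=> n; rewrite /excess addn0 subrr d_le0.
by rewrite count_pred0 mul0r.
Qed.

Lemma excess_freq_bounds M t d : 0 <= excess_freq M t d <= 1.
Proof.
have pow_gt0 : 0 < (2 ^ M)%:R :> R by rewrite ltr0n expn_gt0.
rewrite /excess_freq /prop_below divr_ge0 //= ler_pdivrMr // mul1r ler_nat.
by rewrite (leq_trans (count_size _ _)) // size_iota.
Qed.

Lemma excess_freq_carry_sum t : (0 < t)%N -> forall K M d, (K + t <= M.+1)%N ->
  carry_sum R K t d <= excess_freq M t d <= carry_sum R K t d + 2 ^- K.
Proof.
elim/binary_ind => [|m m_gt0 IH|m m_gt0 IHm IHm1] K M d KM.
- elim: K M d KM => [|K IHK] M d KM.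
    by rewrite /carry_sum big_ord0 expr0 invr1 add0r excess_freq_bounds.
  case: M KM => [|M] KM; first by lia.
  rewrite (excess_freq_odd M 0) excess_freq0 carry_sum_succ hmass_one invexp2S.
  have /andP [? ?] := IHK M (d + 1) ltac:(lia).
  by case: ifP => _; apply/andP; split; lra.
- case: M KM => [|M] KM; first by lia.
  by rewrite excess_freq_double carry_sum_double //; apply: IH; lia.
- case: M KM => [|M] KM; first by lia.
  rewrite excess_freq_odd carry_sum_odd //.
  have /andP [? ?] := IHm K M (d - 1) ltac:(lia).
  have /andP [? ?] := IHm1 K M (d + 1) ltac:(lia).
  by apply/andP; split; lra.
Qed.

End ExcessFrequency.

Lemma dist_ratio_le (R : realFieldType) (x y t Q N : R) : 0 < Q -> 0 < N ->
  x * Q <= (y + t) * N + 2 * Q * Q -> y * N <= x * Q + t * N + Q * Q ->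
  `|x / N - y / Q| <= t / Q + 2 * Q / N.
Proof.
move=> Q_gt0 N_gt0 upper lower; have NQ_gt0 : 0 < N * Q by rewrite mulr_gt0.
have QQ_ge0 : 0 <= Q * Q by rewrite mulr_ge0 ?ltW.
have xE : x / N * (N * Q) = x * Q by field; rewrite gt_eqF.
rewrite ler_distl; apply/andP; split; rewrite -(ler_pM2r NQ_gt0) xE.
  rewrite (_ : _ * (N * Q) = y * N - t * N - 2 * Q * Q); first lra.
  by field; rewrite !gt_eqF.
rewrite (_ : _ * (N * Q) = y * N + t * N + 2 * Q * Q); first lra.
by field; rewrite !gt_eqF.
Qed.

Lemma near_div_lt (R : archiRealFieldType) (a e : R) : 0 <= a -> 0 < e ->
  \forall N \near \oo, a / N%:R < e.
Proof.
move=> a_ge0 e_gt0; exists (Num.bound (a / e)).+1 => // N /= N_gt.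
have N_pos : 0 < N%:R :> R by rewrite ltr0n (leq_trans _ N_gt).
have : a / e < N%:R.
  apply: lt_le_trans (archi_boundP _) _; first exact: divr_ge0 a_ge0 (ltW e_gt0).
  by rewrite ler_nat ltnW.
by rewrite !ltr_pdivrMr // mulrC.
Qed.

Section Density.
Variable R : realType.

Lemma prop_below_excess_dist M t d N : (t <= 2 ^ M)%N -> (0 < N)%N ->
  `|prop_below (excess t d) N - excess_freq R M t d| <=
    t%:R / (2 ^ M)%:R + 2 * (2 ^ M)%:R / N%:R.
Proof.
move=> tQ N_gt0; have [upper lower] := count_excess_cross d N tQ.
apply: dist_ratio_le; rewrite ?ltr0n ?expn_gt0 //.
  by move: upper; rewrite -(ler_nat R) !natrD !natrM natrD.
by move: lower; rewrite -(ler_nat R) !natrD !natrM.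
Qed.

Lemma excess_density t d : exists c : R, has_density (excess t d) c /\
  forall M, (t <= 2 ^ M)%N -> `|c - excess_freq R M t d| <= t%:R / (2 ^ M)%:R.
Proof.
pose a N : R := prop_below (excess t d) N.
have near_freq M e : (t <= 2 ^ M)%N -> 0 < e ->
    \forall N \near \oo, `|a N - excess_freq R M t d| <= t%:R / (2 ^ M)%:R + e.
  move=> tQ e_gt0; near=> N.
  have N_gt0 : (0 < N)%N by near: N; exists 1%N.
  apply: le_trans (prop_below_excess_dist d tQ N_gt0) _; rewrite lerD2l ltW //.
  by near: N; apply: near_div_lt; rewrite ?mulr_ge0.
have a_cvg : cvg (a @ \oo).
  apply/cauchy_cvgP; apply: cauchy_exP => e e_gt0.
  have [M0 _ smallM] := near_div_lt (ler0n R t) (divr_gt0 e_gt0 (ltr0n R 2)).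
  have M_lt := ltn_expl (M0 + t) (isT : (1 < 2)%N).
  have tQ : (t <= 2 ^ (M0 + t))%N by lia.
  have t_small : t%:R / (2 ^ (M0 + t))%:R < e / 2 by apply: smallM => /=; lia.
  exists (excess_freq R (M0 + t) t d).
  apply: filterS (near_freq _ (e / 4) tQ _) => [N|]; last lra.
  by rewrite /ball /= distrC; lra.
exists (lim (a @ \oo)); split => // M tQ.
apply/ler_addgt0Pr => e e_gt0; rewrite ler_distl; apply/andP; split.
  apply: limr_ge => //; apply: filterS (near_freq M e tQ e_gt0) => N.
  by rewrite ler_distl => /andP [].
apply: limr_le => //; apply: filterS (near_freq M e tQ e_gt0) => N.
by rewrite ler_distl => /andP [].
Unshelve. all: end_near.
Qed.

End Density.

Lemma ler_add_scaled_invexp2 (R : archiRealFieldType) (x y a : R) K0 : 0 <= a ->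
  (forall K, (K0 <= K)%N -> x <= y + a * 2 ^- K) -> x <= y.
Proof.
move=> a_ge0 x_le; apply/ler_addgt0Pr => e e_gt0.
have [N0 _ a_small] := near_div_lt a_ge0 e_gt0.
have K_lt := ltn_expl (K0 + N0) (isT : (1 < 2)%N).
have : a / (2 ^ (K0 + N0))%:R < e by apply: a_small => /=; lia.
by have := x_le (K0 + N0)%N (leq_addr _ _); rewrite natrX; lra.
Qed.

Lemma excess_density_carry_sum (R : realType) t d : (0 < t)%N ->
  exists c : R, has_density (excess t d) c /\
    forall K, carry_sum R K t d <= c <= carry_sum R K t d + 2 ^- K.
Proof.
move=> t_gt0; have [c [c_dens c_freq]] := excess_density R t d.
exists c; split => // K.
have near_c M : (K + t <= M)%N ->
    carry_sum R K t d <= c + t%:R * 2 ^- M /\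
    c <= carry_sum R K t d + 2 ^- K + t%:R * 2 ^- M.
  move=> KM; have M_lt := ltn_expl M (isT : (1 < 2)%N).
  have /andP [lo hi] := excess_freq_carry_sum R t_gt0 d (leq_trans KM (leqnSn M)).
  by move: (c_freq M ltac:(lia)); rewrite ler_distl natrX -exprVn => /andP [? ?]; split; lra.
apply/andP; split; apply: (ler_add_scaled_invexp2 (K0 := K + t)%N (ler0n R t)) => M KM.
  by case: (near_c M KM).
by case: (near_c M KM).
Qed.

Lemma hsum_hmass (R : realType) t : (0 < t)%N -> hsum t = (hmass R t 0)%:E.
Proof.
move=> t_gt0; rewrite /hsum (@nneseries_split R _ 0 t); last first.
  by move=> i _; rewrite lee_fin sumr_ge0 // => j _; rewrite mulr_ge0 ?invr_ge0 ?exprn_ge0.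
rewrite eseries0 ?adde0; last first.
  by move=> i i_ge _; rewrite big1 // => j _; rewrite h_eq0 ?mulr0 // -(add0n t) i_ge.
rewrite sumEFin add0n big_mkord; congr _%:E; apply: eq_bigr => i _.
rewrite (big_ord_widen t (fun j => 2 ^- (i + j) * (h i j t)%:R : R)) //.
by rewrite big_mkcond; apply: eq_bigr => j _; rewrite /hmass_term subr_ge0 lez_nat ltnS.
Qed.

Lemma sum_invexp2 (R : realFieldType) K : \sum_(g < K) 2 ^- g.+1 = 1 - 2 ^- K :> R.
Proof.
elim: K => [|K IH]; first by rewrite big_ord0 expr0 invr1 subrr.
by rewrite big_ord_recr /= IH invexp2S; lra.
Qed.

Section CarrySumBounds.
Variable R : realFieldType.
Hypothesis hmass_half : forall u, (0 < u)%N -> 1 / 2 <= hmass R u 0.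

Lemma carry_sum_lower t K : (0 < t)%N -> 1 / 2 - 2 ^- K <= carry_sum R K t 0.
Proof.
move=> t_gt0; have := hmass_half (ltn0Sn (t * 2 ^ K)); rewrite hmass_mul_pow2_succ //.
have /andP [_ hmass_le1] := hmass_bounds R (ltn0Sn t) (0 + K%:Z).
have : 2 ^- K * hmass R t.+1 (0 + K%:Z) <= 2 ^- K by rewrite ler_piMr ?invr_ge0 ?exprn_ge0.
lra.
Qed.

Lemma carry_sum_upper t K : (0 < t)%N -> carry_sum R K t 1 <= 1 / 2.
Proof.
move=> t_gt0; pose k := trunc_log 2 (2 * t).
have k_lo : (2 ^ k <= 2 * t)%N by apply: trunc_logP; lia.
have k_hi : (2 * t < 2 ^ k.+1)%N by apply: trunc_log_ltn.
pose v := (3 * 2 ^ k - 2 * t)%N.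
have v_ge2 : (2 <= v)%N by rewrite /v; rewrite expnS in k_hi; lia.
have pow_gt0 : (0 < 2 ^ K)%N by rewrite expn_gt0.
have vK_gt0 : (0 < (v * 2 ^ K).-1)%N by have := leq_mul v_ge2 pow_gt0; lia.
have := hmass_half vK_gt0; rewrite hmass_mul_pow2_pred //.
have v1_gt0 : (0 < v.-1)%N by lia.
have /andP [_ hmass_le1] := hmass_bounds R v1_gt0 (0 - K%:Z).
have : 2 ^- K * hmass R v.-1 (0 - K%:Z) <= 2 ^- K by rewrite ler_piMr ?invr_ge0 ?exprn_ge0.
have -> : borrow_sum R K v 0 = (1 - 2 ^- K) - carry_sum R K t 1.
  rewrite /borrow_sum /carry_sum -sum_invexp2 -sumrB; apply: eq_bigr => g _.
  rewrite /v hmass_reflect; last by rewrite k_lo ltnW.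
  rewrite hmass_double // (_ : 1 - (0 + 1 - g%:Z) = 1 - 1 + g%:Z); last by lia.
  by rewrite mulrBr mulr1.
lra.
Qed.

End CarrySumBounds.

Theorem corollary3p4 (R : realType) :
  (forall t : nat, (1 <= t)%N -> ((1 / 2 : R)%:E <= hsum (R := R) t)%E) ->
  forall t : nat, (1 <= t)%N ->
    (exists c : R, has_density (fun n => s n <= s (n + t))%N c /\ (1 / 2 <= c)%R) /\
    (exists ct : R, has_density (fun n => s n < s (n + t))%N ct /\ (ct <= 1 / 2)%R).
Proof.
move=> hyp t t_gt0.
have hmass_half u : (0 < u)%N -> 1 / 2 <= hmass R u 0.
  by move=> u_gt0; have := hyp u u_gt0; rewrite hsum_hmass // lee_fin.
split.
  have [c [c_dens c_carry]] := excess_density_carry_sum R 0 t_gt0.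
  exists c; split.
    by rewrite -excess0E.
  apply: (ler_add_scaled_invexp2 (K0 := 0%N) ler01) => K _.
  by have := carry_sum_lower hmass_half K t_gt0; have /andP [? _] := c_carry K; lra.
have [c [c_dens c_carry]] := excess_density_carry_sum R 1 t_gt0.
exists c; split.
  by rewrite -excess1E.
apply: (ler_add_scaled_invexp2 (K0 := 0%N) ler01) => K _.
by have := carry_sum_upper hmass_half K t_gt0; have /andP [_ ?] := c_carry K; lra.
Qed.
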